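(* Let $G$ be a countable group with a right-invariant metric $d$ whose integer balls $B_k=\{g:d(g,e)\le k\}$ are finite, having the Besicovitch covering property with constant $C$, and such that $(B_k)$ has the multiplicative doubling property with constant $D$. Let $G$ act non-singularly on a probability space $(X,\mu)$. Then for every $f\in L^1(\mu)$ and $\epsilon>0$, $$\mu\Big(\sup_{k\ge1}\Big|\frac{\sum_{g\in B_k}\hat gf}{\sum_{g\in B_k}\hat g1}\Big|>\epsilon\Big)\le\frac{CD}{\epsilon}\|f\|_1.$$
   Context: $\omega_g=\frac{d(\mu\circ g)}{d\mu}$, $\hat gf(x)=f(gx)\omega_g(x)$. Besicovitch covering property with constant $C$: for every finite $E$ and collection $\mathcal{U}=\{B_{r(x)}(x):x\in E\}$ of closed balls centred in $E$ there is $\mathcal{V}\subseteq\mathcal{U}$ with $\mathbf{1}_E\le\sum_{U\in\mathcal{V}}\mathbf{1}_U\le C$. Multiplicative doubling with constant $D$: there is $K$ with $|B_kB_k|\le D|B_k|$ for all $k\ge K$. *)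

From HB Require Import structures.
From mathcomp Require Import all_boot all_order all_algebra.
From mathcomp Require Import all_classical all_reals all_analysis.
From mathcomp Require Import finmap.

Set Implicit Arguments.
Unset Strict Implicit.
Unset Printing Implicit Defensive.

Import Order.TTheory GRing.Theory Num.Theory.
Local Open Scope classical_set_scope.
Local Open Scope ring_scope.

Section Defs.
Variables (R : realType) (G : groupType).

Definition is_metric (d : G -> G -> R) : Prop :=
  [/\ forall x y, d x y = 0 <-> x = y,
      forall x y, d x y = d y x &
      forall x y z, d x z <= d x y + d y z].

Definition right_invariant (d : G -> G -> R) : Prop :=
  forall x y g, d (monoid.mul x g) (monoid.mul y g) = d x y.

Definition cball (d : G -> G -> R) (x : G) (r : R) : set G :=
  [set y | d y x <= r].

Definition Bk (d : G -> G -> R) (k : nat) : set G := cball d monoid.one k%:R.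

Definition besicovitch (d : G -> G -> R) (C : R) : Prop :=
  forall (E : set G) (r : G -> R), finite_set E ->
    (forall x, E x -> 0 <= r x) ->
    exists F : set G, F `<=` E /\
      forall y : G,
        (E y -> exists2 x, F x & cball d x (r x) y) /\
        (\sum_(x \in F) (\1_(cball d x (r x)) y : R) <= C).

Definition setMul (A B : set G) : set G :=
  [set z | exists2 a, A a & exists2 b, B b & z = monoid.mul a b].

Definition mult_doubling (d : G -> G -> R) (D : R) : Prop :=
  exists K : nat, forall k : nat, (K <= k)%N ->
    (#|` fset_set (setMul (Bk d k) (Bk d k)) |%:R : R)
      <= D * (#|` fset_set (Bk d k) |%:R).

End Defs.

Section Action.
Variables (R : realType) (G : groupType) (dX : measure_display)
  (X : measurableType dX).

Definition measurable_action (act : G -> X -> X) : Prop :=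
  [/\ forall x, act monoid.one x = x,
      forall g h x, act (monoid.mul g h) x = act g (act h x) &
      forall g, measurable_fun [set: X] (act g)].

Definition nonsingular (mu : set X -> \bar R) (act : G -> X -> X) : Prop :=
  forall g A, measurable A -> (mu (act g @^-1` A) = 0%E <-> mu A = 0%E).

(* omega g is (a real-valued version of) the Radon-Nikodym derivative
   d(mu o g)/d mu, where (mu o g)(A) = mu (g A) *)
Definition is_RN_cocycle (mu : set X -> \bar R) (act : G -> X -> X)
    (omega : G -> X -> R) : Prop :=
  forall g, [/\ measurable_fun [set: X] (omega g),
    forall x, 0 <= omega g x &
    forall A, measurable A ->
      mu (act g @` A) = (\int[mu]_(x in A) (omega g x)%:E)%E].

Definition hat (act : G -> X -> X) (omega : G -> X -> R) (g : G)
    (f : X -> R) : X -> R :=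
  fun x => f (act g x) * omega g x.

Definition hatsum (d : G -> G -> R) (act : G -> X -> X) (omega : G -> X -> R)
    (k : nat) (f : X -> R) : X -> R :=
  fun x => \sum_(g \in Bk d k) hat act omega g f x.

End Action.

From HB Require Import structures.
From mathcomp Require Import all_boot all_order all_algebra finmap.
From mathcomp Require Import all_classical all_reals all_analysis.
From mathcomp Require Import measurable_realfun ring.

(* Transference.  Fix N and let E_N be the set where one of the ratios with
   1 <= k <= N exceeds eps.  For L >= N and almost every x, each h in B_L with
   h x in E_N has a radius k <= N for which, by the cocycle identity
   omega_g(h x) omega_h(x) = omega_(g h)(x) and right invariance (B_k h is the
   ball of radius k about h),
     eps * sum_(g in B_k h) omega_g(x) <= sum_(g in B_k h) |f(g x)| omega_g(x).
   These balls lie in B_L B_L, and the Besicovitch property glues them into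
     eps * sum_(h in B_L) 1_(E_N)(h x) omega_h(x)
       <= C * sum_(g in B_L B_L) |f(g x)| omega_g(x).
   Since omega_g is the density of mu o g, integrating in x gives
   eps |B_L| mu(E_N) <= C |B_L B_L| ||f||_1 <= C D |B_L| ||f||_1 for L large;
   the sets E_N increase to the set of the theorem. *)

Set Implicit Arguments.
Unset Strict Implicit.
Unset Printing Implicit Defensive.

Import Order.TTheory GRing.Theory Num.Theory.
Local Open Scope classical_set_scope.
Local Open Scope ring_scope.

Section density_change_of_variables.
Local Open Scope ereal_scope.
Context d (T : measurableType d) (R : realType).
Variables (nu : {finite_measure set T -> \bar R})
  (mu : {sigma_finite_measure set T -> \bar R}) (g : T -> R).
Hypotheses (mg : measurable_fun setT g) (g_ge0 : forall x, (0 <= g x)%R)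
  (nu_density : forall A, measurable A -> nu A = \int[mu]_(x in A) (g x)%:E).

(* [g] agrees mu-a.e. with the Radon-Nikodym derivative of the library. *)
Lemma density_change_of_variables (h : T -> \bar R) (E : set T) :
    (forall x, 0 <= h x) -> measurable E -> measurable_fun E h ->
  \int[mu]_(x in E) (h x * (g x)%:E) = \int[nu]_(x in E) h x.
Proof.
move=> h0 mE mh.
have mgE : measurable_fun setT (EFin \o g) by exact/measurable_EFinP.
have numu : nu `<< mu.
  apply/null_content_dominatesP => A mA muA0; rewrite nu_density//.
  exact: (null_set_integral mA (measurable_funTS mgE) muA0).
have RN_integrable := Radon_Nikodym_SigmaFinite.f_integrable numu.
have RN_g : ae_eq mu E (Radon_Nikodym_SigmaFinite.f nu mu) (EFin \o g).
  apply: integral_ae_eq => //; first exact: integrableS RN_integrable.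
    exact: measurable_funTS.
  move=> A _ mA; rewrite -nu_density//.
  by rewrite -Radon_Nikodym_SigmaFinite.f_integral.
rewrite -(Radon_Nikodym_SigmaFinite.change_of_variables numu)//.
apply: ae_eq_integral => //.
- by apply: emeasurable_funM => //; exact: measurable_funTS.
- apply: emeasurable_funM => //; apply: measurable_funTS.
  exact: measurable_int RN_integrable.
- exact/ae_eq_sym/ae_eqe_mul2l.
Qed.

End density_change_of_variables.

Lemma measurable_norm_ratio_gt d (T : measurableType d) (R : realType)
    (eps : R) (a b : T -> R) : 0 < eps ->
  measurable_fun setT a -> measurable_fun setT b ->
  measurable [set x | eps < `|a x / b x|].
Proof.
move=> eps0 ma mb.
pose P x := (b x != 0) && (eps * `|b x| < `|a x|).
have -> : [set x | eps < `|a x / b x|] = P @^-1` [set true].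
  apply/seteqP; split => x /=; rewrite /P; last first.
    by case/andP => b0; rewrite normrM normfV ltr_pdivlMr ?normr_gt0.
  have [->|b0] := eqVneq (b x) 0.
    by rewrite invr0 mulr0 normr0 => /(lt_trans eps0); rewrite ltxx.
  by rewrite normrM normfV ltr_pdivlMr ?normr_gt0.
have mP : measurable_fun setT P.
  apply: measurable_and.
    by apply/measurable_neg/measurable_fun_eqr => //; exact: measurable_cst.
  apply: measurable_fun_ltr; last exact: measurableT_comp ma.
  by apply: measurable_funM; [exact: measurable_cst|exact: measurableT_comp mb].
by rewrite -[X in measurable X]setTI; exact: mP.
Qed.

Lemma ae_all_seq d (T : measurableType d) (R : realType) (mu : measure T R)
    (I : eqType) (s : seq I) (P : I -> T -> Prop) :
  (forall i, \forall x \ae mu, P i x) ->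
  \forall x \ae mu, forall i, i \in s -> P i x.
Proof.
move=> aeP; elim: s => [|i s IH]; first by apply: nearW => x i.
apply: filterS2 (aeP i) IH => x Pi Ps j; rewrite inE => /orP[/eqP->//|].
exact: Ps.
Qed.

Lemma ler_term_sum (R : numDomainType) (I : eqType) (s : seq I) (F : I -> R) x :
  (forall i, 0 <= F i) -> uniq s -> x \in s -> F x <= \sum_(i <- s) F i.
Proof.
by move=> F0 us xs; rewrite (bigD1_seq x) //= lerDl sumr_ge0.
Qed.

Lemma sum_fset_set_indic (R : numDomainType) (I : choiceType) (A T : set I)
    (F : I -> R) : finite_set T -> A `<=` T ->
  \sum_(y <- fset_set A) F y = \sum_(y <- fset_set T) (\1_A y * F y).
Proof.
move=> finT AT; have finA := sub_finite_set AT finT.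
rewrite -!fsbig_finite // -[in LHS](setIidr AT) fsbig_mkcondr.
apply: eq_fsbigr => y _; rewrite indicE.
by case: (y \in A); rewrite ?mul1r ?mul0r.
Qed.

Section besicovitch_inequality.
Variables (R : realType) (G : groupType) (d : G -> G -> R) (C : R).
Hypothesis hC : besicovitch d C.

Lemma besicovitch_const_ge0 : 0 <= C.
Proof.
have [F [FE HF]] :=
  @hC [set monoid.one] (fun=> 0) (finite_set1 _) (fun _ _ => lexx 0).
have finF : finite_set F := sub_finite_set FE (finite_set1 _).
apply: le_trans (HF monoid.one).2; rewrite fsbig_finite //.
by apply: sumr_ge0 => x _; rewrite indicE; case: (_ \in _).
Qed.

(* The balls of a Besicovitch subcover of [E] overlap at most [C] times. *)
Lemma besicovitch_weighted_ineq (eps : R) (E T : set G) (rad w F : G -> R) :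
  0 < eps -> finite_set T -> E `<=` T -> (forall x, 0 <= rad x) ->
  (forall y, 0 <= w y) -> (forall y, 0 <= F y) ->
  (forall x, E x ->
     eps * \sum_(y <- fset_set T) (\1_(cball d x (rad x)) y * w y)
     <= \sum_(y <- fset_set T) (\1_(cball d x (rad x)) y * F y)) ->
  eps * \sum_(y <- fset_set T) (\1_E y * w y) <= C * \sum_(y <- fset_set T) F y.
Proof.
move=> eps0 finT ET rad0 w0 F0 ball_ineq.
have finE : finite_set E := sub_finite_set ET finT.
have [S [SE HS]] := @hC E rad finE (fun x _ => rad0 x).
have finS : finite_set S := sub_finite_set SE finE.
pose b x y : R := \1_(cball d x (rad x)) y.
have b0 x y : 0 <= b x y by rewrite /b indicE; case: (_ \in _).
have covered : \sum_(y <- fset_set T) (\1_E y * w y) <=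
    \sum_(x <- fset_set S) \sum_(y <- fset_set T) (b x y * w y).
  rewrite exchange_big /=; apply: ler_sum => y _; rewrite indicE.
  rewrite -mulr_suml; apply: ler_wpM2r => //.
  case: (boolP (y \in E)) => [/set_mem Ey|_]; last exact: sumr_ge0.
  have [x Sx bxy] := (HS y).1 Ey.
  have -> : 1 = b x y by rewrite /b indicE mem_set.
  apply: (@ler_term_sum _ _ _ (b^~ y)) => //; first exact: fset_uniq.
  by rewrite in_fset_set ?inE.
have overlap : \sum_(x <- fset_set S) \sum_(y <- fset_set T) (b x y * F y)
    <= C * \sum_(y <- fset_set T) F y.
  rewrite exchange_big /= mulr_sumr; apply: ler_sum => y _.
  rewrite -mulr_suml ler_wpM2r //.
  by have := (HS y).2; rewrite fsbig_finite.
apply: le_trans overlap; apply: le_trans (ler_wpM2l (ltW eps0) covered) _.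
rewrite mulr_sumr [X in _ <= X]big_seq big_seq; apply: ler_sum => x.
by rewrite in_fset_set // => /set_mem Sx; exact: ball_ineq (SE _ Sx).
Qed.

End besicovitch_inequality.

Section right_invariant_balls.
Variables (R : realType) (G : groupType) (d : G -> G -> R).
Hypotheses (d_metric : is_metric d) (d_rinv : right_invariant d)
  (Bk_finite : forall k : nat, finite_set (Bk d k)).

Local Notation mulg := (@monoid.mul G).
Local Notation oneg := (@monoid.one G).

Lemma setMulE (A B : set G) :
  setMul A B = (fun p => mulg p.1 p.2) @` (A `*` B).
Proof.
apply/seteqP; split => [z [a Aa [b Bb ->]]|_ [[a b] [/= Aa Bb] <-]].
  by exists (a, b).
by exists a => //; exists b.
Qed.

Lemma finite_setMul (A B : set G) : finite_set A -> finite_set B ->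
  finite_set (setMul A B).
Proof. by move=> fA fB; rewrite setMulE; apply/finite_image/finite_setX. Qed.

Lemma Bk_one k : Bk d k oneg.
Proof. by case: d_metric => d0 _ _; rewrite /Bk /cball /= (proj2 (d0 _ _)). Qed.

Lemma Bk_subset k L : (k <= L)%N -> Bk d k `<=` Bk d L.
Proof. by move=> kL g /le_trans; apply; rewrite ler_nat. Qed.

Lemma Bk_sub_setMul k : Bk d k `<=` setMul (Bk d k) (Bk d k).
Proof.
by move=> h hk; exists oneg; [exact: Bk_one|exists h; rewrite ?monoid.mul1g].
Qed.

Lemma cball_rmul h (r : R) :
  cball d h r = (fun g => mulg g h) @` cball d oneg r.
Proof.
have dE g : d (mulg g h) h = d g oneg by rewrite -{2}(monoid.mul1g h) d_rinv.
apply/seteqP; split => [y yr|_ [g gr <-]]; last by rewrite /cball /= dE.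
exists (mulg y (monoid.inv h)); rewrite /cball /=.
  by rewrite -dE -monoid.mulgA monoid.mulVg monoid.mulg1.
by rewrite -monoid.mulgA monoid.mulVg monoid.mulg1.
Qed.

Lemma cball_sub_setMul k L h : (k <= L)%N -> Bk d L h ->
  cball d h k%:R `<=` setMul (Bk d L) (Bk d L).
Proof.
move=> kL hL; rewrite cball_rmul => _ [g gk <-].
by exists g; [exact: Bk_subset gk|exists h].
Qed.

Lemma sum_Bk_rmul h k (T : set G) (F : G -> R) :
  finite_set T -> cball d h k%:R `<=` T ->
  \sum_(g <- fset_set (Bk d k)) F (mulg g h) =
  \sum_(y <- fset_set T) (\1_(cball d h k%:R) y * F y).
Proof.
move=> finT hkT; rewrite -sum_fset_set_indic //.
rewrite -(fsbig_finite _ _ (Bk_finite k)).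
rewrite -(fsbig_finite _ _ (sub_finite_set hkT finT)) cball_rmul fsbig_image //.
by move=> x y _ _; exact: monoid.mulIg.
Qed.

End right_invariant_balls.

Section nonsingular_action.
Local Open Scope ereal_scope.
Variables (R : realType) (G : groupType) (dX : measure_display)
  (X : measurableType dX) (mu : probability X R) (act : G -> X -> X)
  (omega : G -> X -> R).
Hypotheses (hact : measurable_action act)
  (homega : is_RN_cocycle mu act omega).

Local Notation mulg := (@monoid.mul G).
Local Notation invg := (@monoid.inv G).

Lemma actM g h x : act (mulg g h) x = act g (act h x).
Proof. by case: hact. Qed.

Lemma actK g : cancel (act g) (act (invg g)).
Proof. by case: hact => act1 _ _ x; rewrite -actM monoid.mulVg act1. Qed.

Lemma actVK g : cancel (act (invg g)) (act g).
Proof. by case: hact => act1 _ _ x; rewrite -actM monoid.mulgV act1. Qed.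

Lemma measurable_act g : measurable_fun setT (act g).
Proof. by case: hact. Qed.

Lemma act_image g (A : set X) : act g @` A = act (invg g) @^-1` A.
Proof.
apply/seteqP; split => [y [a Aa <-]|y Ay]; first by rewrite /= actK.
by exists (act (invg g) y) => //; rewrite actVK.
Qed.

Lemma measurable_act_image g (A : set X) :
  measurable A -> measurable (act g @` A).
Proof.
move=> mA; rewrite act_image -[X in measurable X]setTI.
exact: measurable_act.
Qed.

Lemma measurable_omega g : measurable_fun setT (omega g).
Proof. by case: (homega g). Qed.

Lemma omega_ge0 g x : (0 <= omega g x)%R.
Proof. by case: (homega g). Qed.

Lemma measure_act_image g A : measurable A ->
  mu (act g @` A) = \int[mu]_(x in A) (omega g x)%:E.
Proof. by move=> mA; case: (homega g) => _ _ ->. Qed.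

(* [omega h] is the density of the image of [mu] under [act (invg h)]. *)
Lemma integral_act_omega h (F : X -> \bar R) : (forall x, 0 <= F x) ->
  measurable_fun setT F ->
  \int[mu]_x (F (act h x) * (omega h x)%:E) = \int[mu]_x F x.
Proof.
move=> F0 mF.
have mact : act (invg h) \in mfun by rewrite inE; exact: measurable_act.
pose nu := distribution mu (mfun_Sub mact).
rewrite (@density_change_of_variables _ _ _ nu mu (omega h)) //=; last 3 first.
- exact: measurable_omega.
- by move=> A mA; rewrite -measure_act_image // act_image.
- exact: measurableT_comp mF (measurable_act h).
rewrite ge0_integral_pushforward //=.
- by rewrite preimage_setT; apply: eq_integral => x _; rewrite actVK.
- exact: measurable_act.
- exact: measurableT_comp mF (measurable_act h).
Qed.

Lemma integrable_omega g : mu.-integrable setT (EFin \o omega g).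
Proof.
apply/integrableP; split; first exact/measurable_EFinP/measurable_omega.
rewrite (eq_integral (fun x => (omega g x)%:E)); last first.
  by move=> x _; rewrite /= ger0_norm ?omega_ge0.
rewrite -measure_act_image // (le_lt_trans (probability_le1 _ _)) ?ltry //.
exact: measurable_act_image.
Qed.

Lemma omega_cocycle_ae g h : ae_eq mu setT (EFin \o omega (mulg g h))
  (fun x => (omega g (act h x) * omega h x)%:E).
Proof.
apply: integral_ae_eq => //; first exact: integrable_omega.
  apply/measurable_EFinP/measurable_funM; last exact: measurable_omega.
  exact: measurableT_comp (measurable_omega g) (measurable_act h).
move=> E _ mE; rewrite /= -measure_act_image //.
pose F y := ((\1_(act h @` E) y : R) * omega g y)%:E.
have mF : measurable_fun setT F.
  apply/measurable_EFinP/measurable_funM; last exact: measurable_omega.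
  exact/measurable_indic/measurable_act_image.
have F0 y : 0 <= F y by rewrite lee_fin mulr_ge0 ?omega_ge0.
have -> : act (mulg g h) @` E = act g @` (act h @` E).
  by rewrite image_comp; congr image; apply/funext => x; rewrite /= actM.
rewrite measure_act_image; last exact: measurable_act_image.
transitivity (\int[mu]_x F x).
  rewrite integral_mkcond; apply: eq_integral => y _; rewrite /patch /F indicE.
  by case: (y \in _); rewrite ?mul1r ?mul0r.
rewrite -(integral_act_omega h) // [RHS]integral_mkcond.
apply: eq_integral => x _; rewrite /patch /F indicE.
rewrite (_ : (act h x \in act h @` E) = (x \in E)); last first.
  apply/idP/idP => [/set_mem [y Ey /(can_inj (actK h)) <-]|/set_mem Ex].
    exact: mem_set.
  by apply: mem_set; exists x.
by case: (x \in E); rewrite ?mul1r ?mul0r ?mul0e -?EFinM.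
Qed.

Lemma measurable_sum_act (s : seq G) (F : X -> R) : measurable_fun setT F ->
  measurable_fun setT (fun x => \sum_(h <- s) F (act h x) * omega h x)%R.
Proof.
move=> mF; apply: measurable_sum => h.
apply: measurable_funM; last exact: measurable_omega h.
exact: measurableT_comp mF (measurable_act h).
Qed.

Lemma sum_act_ge0 (s : seq G) (F : X -> R) x : (forall y, 0 <= F y)%R ->
  (0 <= \sum_(h <- s) F (act h x) * omega h x)%R.
Proof.
move=> F0; apply: sumr_ge0 => h _.
by rewrite mulr_ge0 ?omega_ge0.
Qed.

Lemma integral_sum_act (s : seq G) (F : X -> R) :
  (forall x, 0 <= F x)%R -> measurable_fun setT F ->
  \int[mu]_x (\sum_(h <- s) F (act h x) * omega h x)%:E =
  (size s)%:R%:E * \int[mu]_x (F x)%:E.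
Proof.
move=> F0 mF; under eq_integral do rewrite -sumEFin.
rewrite ge0_integral_sum //; last 2 first.
- move=> h; apply/measurable_EFinP/measurable_funM.
    exact: measurableT_comp mF (measurable_act h).
  exact: measurable_omega h.
- by move=> h x _; rewrite lee_fin mulr_ge0 ?omega_ge0.
rewrite (eq_bigr (fun=> \int[mu]_x (F x)%:E)).
  by rewrite big_const_seq count_predT iter_addr_0 mule_natl.
move=> h _; under eq_integral do rewrite EFinM.
by rewrite (integral_act_omega h (F := EFin \o F)) //; exact/measurable_EFinP.
Qed.

End nonsingular_action.

Section maximal_inequality.
Variables (R : realType) (G : groupType) (d : G -> G -> R)
  (dX : measure_display) (X : measurableType dX) (mu : probability X R)
  (act : G -> X -> X) (omega : G -> X -> R) (C D eps : R) (f : X -> R).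
Hypotheses (d_metric : is_metric d) (d_rinv : right_invariant d)
  (Bk_finite : forall k : nat, finite_set (Bk d k))
  (hC : besicovitch d C) (hD : mult_doubling d D)
  (hact : measurable_action act) (homega : is_RN_cocycle mu act omega)
  (hf : mu.-integrable [set: X] (EFin \o f)) (heps : 0 < eps).

Local Notation mulg := (@monoid.mul G).

Definition hat_ratio k x :=
  hatsum d act omega k f x / hatsum d act omega k (fun=> 1) x.

Definition large_ratio_set N :=
  [set x | exists2 k, (1 <= k <= N)%N & eps < `|hat_ratio k x|].

Definition cocycle_at (A : set G) x :=
  forall g h, A g -> A h -> omega g (act h x) * omega h x = omega (mulg g h) x.

Lemma measurable_f : measurable_fun setT f.
Proof. exact/measurable_EFinP/(measurable_int mu hf). Qed.

Lemma hatsumE k F x : hatsum d act omega k F x =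
  \sum_(g <- fset_set (Bk d k)) F (act g x) * omega g x.
Proof. by rewrite /hatsum fsbig_finite. Qed.

Lemma measurable_hatsum k F : measurable_fun setT F ->
  measurable_fun setT (hatsum d act omega k F).
Proof.
move=> mF; rewrite (_ : hatsum _ _ _ _ _ = fun x =>
  \sum_(g <- fset_set (Bk d k)) F (act g x) * omega g x); last first.
  by apply/funext => x; rewrite hatsumE.
exact: measurable_sum_act.
Qed.

Lemma measurable_large_ratio_set N : measurable (large_ratio_set N).
Proof.
rewrite (_ : large_ratio_set N = \bigcup_(k in [set k | (1 <= k <= N)%N])
    [set x | eps < `|hat_ratio k x|]); last first.
  by apply/seteqP; split => x [k kN hk]; exists k.
apply: bigcup_measurable => k _; apply: measurable_norm_ratio_gt => //.
  exact: measurable_hatsum measurable_f.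
by apply: measurable_hatsum; exact: measurable_cst.
Qed.

Lemma cocycle_at_ae (A : set G) : finite_set A ->
  \forall x \ae mu, cocycle_at A x.
Proof.
move=> finA.
have : \forall x \ae mu, forall g, g \in fset_set A ->
    forall h, h \in fset_set A ->
    omega g (act h x) * omega h x = omega (mulg g h) x.
  apply: ae_all_seq => g; apply: ae_all_seq => h.
  by apply: filterS (omega_cocycle_ae hact homega g h) => x /(_ I) [->].
apply: filterS => x cocycle g h Ag Ah.
by apply: cocycle; rewrite in_fset_set // inE.
Qed.

Lemma hat_ratio_gt k y : eps < `|hat_ratio k y| ->
  eps * \sum_(g <- fset_set (Bk d k)) omega g y <=
  \sum_(g <- fset_set (Bk d k)) `|f (act g y)| * omega g y.
Proof.
rewrite /hat_ratio !hatsumE.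
have -> : \sum_(g <- fset_set (Bk d k)) (fun=> 1) (act g y) * omega g y =
  \sum_(g <- fset_set (Bk d k)) omega g y.
  by apply: eq_bigr => g _; rewrite mul1r.
set b := \sum_(g <- _) omega g y.
have b_ge0 : 0 <= b by apply: sumr_ge0 => g _; exact: omega_ge0 homega g y.
have [->|b_neq0] := eqVneq b 0.
  by rewrite invr0 mulr0 normr0 => /(lt_trans heps); rewrite ltxx.
rewrite normrM normfV (ger0_norm b_ge0) ltr_pdivlMr; last first.
  by rewrite lt_neqAle eq_sym b_neq0.
move=> /ltW /le_trans; apply; apply: le_trans (ler_norm_sum _ _ _) _.
by apply: ler_sum => g _; rewrite normrM (ger0_norm (omega_ge0 homega _ _)).
Qed.

Lemma hat_ratio_gt_translate (A : set G) k h x :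
  cocycle_at A x -> Bk d k `<=` A -> A h ->
  eps < `|hat_ratio k (act h x)| ->
  eps * \sum_(g <- fset_set (Bk d k)) omega (mulg g h) x <=
  \sum_(g <- fset_set (Bk d k)) `|f (act (mulg g h) x)| * omega (mulg g h) x.
Proof.
move=> cocycle BkA Ah /hat_ratio_gt ratio_gt.
have memA g : g \in fset_set (Bk d k) -> A g.
  by rewrite in_fset_set // inE => /BkA.
rewrite big_seq [X in _ <= X]big_seq.
rewrite (eq_bigr (fun g => omega g (act h x) * omega h x)); last first.
  by move=> g /memA Ag; rewrite cocycle.
rewrite [X in _ <= X](eq_bigr (fun g =>
    `|f (act g (act h x))| * omega g (act h x) * omega h x)); last first.
  by move=> g /memA Ag; rewrite -mulrA cocycle // (actM hact).
rewrite -!big_seq -!mulr_suml mulrA ler_wpM2r //.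
exact: omega_ge0 homega h x.
Qed.

Lemma transference_pointwise N L x : (N <= L)%N ->
  cocycle_at (setMul (Bk d L) (Bk d L)) x ->
  eps * \sum_(h <- fset_set (Bk d L))
          \1_(large_ratio_set N) (act h x) * omega h x
  <= C * \sum_(y <- fset_set (setMul (Bk d L) (Bk d L)))
           `|f (act y x)| * omega y x.
Proof.
move=> NL cocycle; set T := setMul (Bk d L) (Bk d L).
have finT : finite_set T by exact: finite_setMul.
have BLT : Bk d L `<=` T by exact: Bk_sub_setMul.
pose E := Bk d L `&` [set h | large_ratio_set N (act h x)].
have /choice [k hk] : forall h, exists k : nat, E h ->
    (1 <= k <= N)%N /\ eps < `|hat_ratio k (act h x)|.
  move=> h; case: (pselect (E h)) => [[_ [k kN hk]]|nEh].
    by exists k.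
  by exists 0%N => /nEh.
rewrite (sum_fset_set_indic _ finT BLT).
rewrite (eq_bigr (fun y => \1_E y * omega y x)); last first.
  by move=> y _; rewrite mulrA indicI.
apply: (besicovitch_weighted_ineq hC (rad := fun h => (k h)%:R)) => //.
- by move=> h [/BLT].
- by move=> y; exact: omega_ge0 homega y x.
- by move=> y; rewrite mulr_ge0 ?(omega_ge0 homega).
move=> h [BLh Eh]; have [/andP[_ kN] ratio_gt] := hk h (conj BLh Eh).
have kL : (k h <= L)%N by exact: leq_trans kN NL.
have ball_T := cball_sub_setMul d_rinv kL BLh.
rewrite -(sum_Bk_rmul d_rinv Bk_finite (omega^~ x) finT ball_T).
rewrite -(sum_Bk_rmul d_rinv Bk_finite (fun y => `|f (act y x)| * omega y x)
  finT ball_T).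
apply: (hat_ratio_gt_translate cocycle _ (BLT _ BLh) ratio_gt).
by move=> g /(Bk_subset kL) /BLT.
Qed.

Lemma transference_integrated N L : (N <= L)%N ->
  ((eps * #|` fset_set (Bk d L)|%:R)%:E * mu (large_ratio_set N) <=
   (C * #|` fset_set (setMul (Bk d L) (Bk d L))|%:R)%:E *
     \int[mu]_x (`|f x|)%:E)%E.
Proof.
move=> NL; set E := large_ratio_set N; set T := setMul (Bk d L) (Bk d L).
have mE : measurable E := measurable_large_ratio_set N.
have indic_ge0 y : 0 <= (\1_E y : R) by rewrite indicE; case: (_ \in _).
have norm_ge0 y : 0 <= `|f y| by [].
have m_indic := measurable_sum_act hact homega (fset_set (Bk d L))
  (measurable_indic mE).
have mnf : measurable_fun setT (fun x => `|f x|).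
  exact: measurableT_comp measurable_f.
have m_norm := measurable_sum_act hact homega (fset_set T) mnf.
have indic_sum_ge0 := sum_act_ge0 homega (fset_set (Bk d L)) _ indic_ge0.
have norm_sum_ge0 := sum_act_ge0 homega (fset_set T) _ norm_ge0.
have C_ge0 := besicovitch_const_ge0 hC.
rewrite !EFinM -!muleA.
have -> : mu E = (\int[mu]_x (\1_E x)%:E)%E by rewrite integral_indic // setIT.
rewrite -!(integral_sum_act hact homega) //.
rewrite -!ge0_integralZl ?lee_fin ?(ltW heps) //;
  try by [apply/measurable_EFinP | move=> x _; rewrite lee_fin].
apply: ae_ge0_le_integral => //.
- by move=> x _; rewrite -EFinM lee_fin mulr_ge0 ?(ltW heps).
- by apply/measurable_EFinP/measurable_funM => //; exact: measurable_cst.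
- by move=> x _; rewrite -EFinM lee_fin mulr_ge0.
- by apply/measurable_EFinP/measurable_funM => //; exact: measurable_cst.
apply: filterS (cocycle_at_ae (finite_setMul (Bk_finite L) (Bk_finite L))).
by move=> x cocycle _; rewrite -!EFinM lee_fin transference_pointwise.
Qed.

Lemma large_ratio_set_bound N :
  (mu (large_ratio_set N) <= (C * D / eps)%:E * \int[mu]_x (`|f x|)%:E)%E.
Proof.
have [K doubling] := hD; pose L := maxn N K.
have := transference_integrated (leq_maxl N K).
have := doubling L (leq_maxr N K); rewrite -/L.
set nB := #|` fset_set (Bk d L)|.
have mu_fin : mu (large_ratio_set N) \is a fin_num.
  exact/fin_num_measure/measurable_large_ratio_set.
have int_fin : (\int[mu]_x (`|f x|)%:E)%E \is a fin_num.
  rewrite ge0_fin_numE; first by case/integrableP: hf.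
  by apply: integral_ge0 => x _; rewrite lee_fin.
rewrite -(fineK mu_fin) -(fineK int_fin) -!EFinM !lee_fin => BB_le transference.
have int_ge0 : 0 <= fine (\int[mu]_x (`|f x|)%:E)%E.
  by apply/fine_ge0/integral_ge0 => x _; rewrite lee_fin.
have nB_gt0 : (0 < nB)%N.
  rewrite /nB -has_predT; apply/hasP; exists monoid.one => //.
  by rewrite in_fset_set // inE; exact: Bk_one.
have eps_nB : 0 < eps * nB%:R by rewrite mulr_gt0 // ltr0n.
rewrite -(ler_pM2l eps_nB); apply: le_trans transference _.
have -> : eps * nB%:R * (C * D / eps * fine (\int[mu]_x (`|f x|)%:E)%E) =
    C * (D * nB%:R) * fine (\int[mu]_x (`|f x|)%:E)%E.
  by field; rewrite gt_eqF.
by rewrite ler_wpM2r // ler_wpM2l // (besicovitch_const_ge0 hC).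
Qed.

Lemma sup_hat_ratio_gtE :
  [set x | (eps%:E < ereal_sup [set (`|hat_ratio k x|)%:E
                                | k in [set k : nat | (1 <= k)%N]])%E] =
  \bigcup_N large_ratio_set N.
Proof.
apply/seteqP; split => x /=.
  move=> /ereal_sup_gt [_ [k k1 <-]]; rewrite lte_fin => ratio_gt.
  by exists k => //; exists k => //; rewrite k1 leqnn.
move=> [N _ [k /andP[k1 kN] ratio_gt]].
apply: (@lt_le_trans _ _ (`|hat_ratio k x|)%:E); first by rewrite lte_fin.
by apply: ereal_sup_ubound; exists k.
Qed.

Lemma nondecreasing_large_ratio_set :
  {homo large_ratio_set : n m / (n <= m)%N >-> (n <= m)%O}.
Proof.
move=> n m nm; apply/subsetPset => x [k /andP[k1 kn] ratio_gt].
by exists k; rewrite ?k1 ?(leq_trans kn nm).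
Qed.

End maximal_inequality.

Theorem theorem7 (R : realType) (G : groupType)
  (G_countable : countable [set: G])
  (d : G -> G -> R) (d_metric : is_metric d) (d_rinv : right_invariant d)
  (Bk_finite : forall k : nat, finite_set (Bk d k))
  (C D : R) (hC : besicovitch d C) (hD : mult_doubling d D)
  (dX : measure_display) (X : measurableType dX)
  (mu : probability X R)
  (act : G -> X -> X) (hact : measurable_action act)
  (hns : nonsingular mu act)
  (omega : G -> X -> R) (homega : is_RN_cocycle mu act omega)
  (f : X -> R) (hf : mu.-integrable [set: X] (EFin \o f))
  (eps : R) (heps : 0 < eps) :
  (mu [set x | eps%:E <
        ereal_sup [set (`| hatsum d act omega k f x
                          / hatsum d act omega k (fun=> 1) x |)%:E
                  | k in [set k : nat | (1 <= k)%N]]]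
   <= (C * D / eps)%:E * \int[mu]_x (`| f x |)%:E)%E.
Proof.
rewrite sup_hat_ratio_gtE; set E := large_ratio_set d act omega eps f.
have mE : forall N, measurable (E N).
  exact: measurable_large_ratio_set Bk_finite hact homega hf heps.
have cvg_mu : (mu \o E) N @[N --> \oo] --> mu (\bigcup_N E N).
  apply: nondecreasing_cvg_mu => //; first exact: bigcup_measurable.
  exact: nondecreasing_large_ratio_set.
rewrite -(cvg_lim _ cvg_mu) //; apply: lime_le.
  by apply/cvg_ex; exists (mu (\bigcup_N E N)).
apply: nearW => N.
exact: (large_ratio_set_bound d_metric d_rinv Bk_finite hC hD hact homega hf heps).
Qed.
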